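(* Let $f:\mathbb{R}^n\to\mathbb{R}$ be convex, differentiable and bounded from below, with $\nabla f$ being $L$-Lipschitz continuous ($L>0$), let $\lambda>0$, and let $H(x)=f(x)+\lambda\|x\|_0$. Let $\{x_k\},\{y_k\}$ be generated by the VMEPIHT method described in the context. Then: (1) every cluster point of $\{x_k\}$ is a local minimizer of $H$; (2) if $x^*$ is a cluster point of $\{x_k\}$, then $H(x_k)\to H(x^* )$.
   Context: $\|x\|_0$ denotes the number of nonzero components of $x\in\mathbb{R}^n$. For $x\in\mathbb{R}^n$, $I(x):=\{i: x_i=0\}$. For an index set $I\subseteq\{1,\dots,n\}$, $C_I:=\{x\in\mathbb{R}^n: x_i=0 \text{ for all } i\in I\}$, and $P_C(x)=\arg\min_{z\in C}\frac12\|z-x\|^2$ is the Euclidean projection onto $C$. VMEPIHT method: fix parameters $\mu>0$, $\lambda>0$ and a starting point $y_0\in\mathbb{R}^n$. For $k=0,1,2,\dots$: choose $x_k\in\arg\min_{x\in\mathbb{R}^n}\ \lambda\|x\|_0+\frac{L}{2}\|x-y_k+\frac1L\nabla f(y_k)\|^2+\frac{\mu}{2}\|x-y_k\|^2$; then choose a symmetric positive definite matrix $H_k$ and a step length $\alpha_k\ge 0$, and set $y_{k+1}=P_{C_{I(x_k)}}(x_k-\alpha_kH_k\nabla f(x_k))$, where $\alpha_k$ is chosen so that $f(y_{k+1})\leq f(x_k)$. *)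

From HB Require Import structures.
From mathcomp Require Import all_boot all_order all_algebra.
From mathcomp Require Import all_classical all_reals all_analysis.
Set Implicit Arguments. Unset Strict Implicit. Unset Printing Implicit Defensive.
Import Order.TTheory GRing.Theory Num.Theory.
Local Open Scope ring_scope.

Section Defs.
Variables (R : realType) (n : nat).
Notation vec := 'cV[R]_n.

Definition dot (x y : vec) : R := \sum_(i < n) x i 0 * y i 0.
Definition enorm (x : vec) : R := Num.sqrt (dot x x).

Definition l0norm (x : vec) : nat := #|[set i : 'I_n | x i 0 != 0]|.

Definition zero_idx (x : vec) : {set 'I_n} := [set i : 'I_n | x i 0 == 0].

Definition C_I (I : {set 'I_n}) (x : vec) : Prop := forall i, i \in I -> x i 0 = 0.

Definition is_proj (C : vec -> Prop) (v p : vec) : Prop :=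
  C p /\ forall z, C z -> 2^-1 * enorm (p - v) ^+ 2 <= 2^-1 * enorm (z - v) ^+ 2.

Definition is_argmin (phi : vec -> R) (x : vec) : Prop := forall z, phi x <= phi z.

Definition convex_fun (f : vec -> R) : Prop :=
  forall (x y : vec) (t : R), 0 <= t -> t <= 1 ->
    f ((1 - t) *: x + t *: y) <= (1 - t) * f x + t * f y.

Definition has_gradient (f : vec -> R) (g : vec -> vec) : Prop :=
  forall x : vec, forall eps : R, 0 < eps -> exists2 delta : R, 0 < delta &
    forall h : vec, enorm h < delta ->
      `|f (x + h) - f x - dot (g x) h| <= eps * enorm h.

Definition lipschitz_with (L : R) (g : vec -> vec) : Prop :=
  forall x y, enorm (g x - g y) <= L * enorm (x - y).

Definition bounded_below (f : vec -> R) : Prop := exists m : R, forall x, m <= f x.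

Definition sym_posdef (M : 'M[R]_n) : Prop :=
  M^T = M /\ forall v : vec, v != 0 -> 0 < dot v (M *m v).

Definition cluster_point (x : nat -> vec) (xs : vec) : Prop :=
  forall eps : R, 0 < eps -> forall N : nat, exists2 k : nat, (N <= k)%N &
    enorm (x k - xs) < eps.

Definition local_minimizer (H : vec -> R) (xs : vec) : Prop :=
  exists2 delta : R, 0 < delta & forall y, enorm (y - xs) < delta -> H xs <= H y.

Definition Hfun (f : vec -> R) (lam : R) (x : vec) : R := f x + lam * (l0norm x)%:R.

Definition VMEPIHT (f : vec -> R) (g : vec -> vec) (L mu lam : R)
    (x y : nat -> vec) (alpha : nat -> R) (Hm : nat -> 'M[R]_n) : Prop :=
  forall k : nat,
    [/\ is_argmin (fun z => lam * (l0norm z)%:R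
                     + L / 2 * enorm (z - y k + L^-1 *: g (y k)) ^+ 2
                     + mu / 2 * enorm (z - y k) ^+ 2) (x k),
        sym_posdef (Hm k),
        0 <= alpha k,
        is_proj (C_I (zero_idx (x k))) (x k - alpha k *: (Hm k *m g (x k))) (y k.+1)
      & f (y k.+1) <= f (x k)].

End Defs.

(* The step producing [x_k] is hard thresholding in disguise: completing the
   square turns it into the [l0]-proximal step of a quadratic of curvature
   [K = L + mu], so every nonzero entry of [x_k] satisfies the stationarity
   equation [K (x_k - y_k)_i + (grad f (y_k))_i = 0] and has modulus at least
   [sqrt (2 lam / K)].  Together with the descent lemma this gives the
   sufficient decrease [H x_(k+1) + mu/2 |x_(k+1) - y_(k+1)|^2 <= H x_k], hence
   [H x_k] converges and [x_k - y_k -> 0].  A coordinate can then no longer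
   enter the support, since it would jump by [sqrt (2 lam / K)]; so the supports
   of the [x_k] are eventually constant, equal to the support [S] of any cluster
   point [xs], and passing to the limit in the stationarity equation shows that
   [grad f xs] vanishes on [S].  A point near [xs] either has support [S], where
   convexity gives [f >= f xs], or pays at least [lam] more in the [l0] term. *)

From mathcomp Require Import all_boot all_order all_algebra.
From mathcomp Require Import all_classical all_reals all_analysis.
From mathcomp Require Import ring lra.
Import Order.TTheory GRing.Theory Num.Theory.
Import numFieldNormedType.Exports.
Set Implicit Arguments. Unset Strict Implicit. Unset Printing Implicit Defensive.
Local Open Scope ring_scope.

Section Euclidean.
Variables (R : realType) (n : nat).
Notation vec := 'cV[R]_n.
Implicit Types (x y z u v : vec) (a : R).

Lemma dotC x y : dot x y = dot y x.
Proof. by apply: eq_bigr => i _; rewrite mulrC. Qed.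

Lemma dotDl x y z : dot (x + y) z = dot x z + dot y z.
Proof. by rewrite /dot -big_split; apply: eq_bigr => i _; rewrite mxE mulrDl. Qed.

Lemma dotZl a x y : dot (a *: x) y = a * dot x y.
Proof. by rewrite /dot mulr_sumr; apply: eq_bigr => i _; rewrite mxE mulrA. Qed.

Lemma dotNl x y : dot (- x) y = - dot x y.
Proof. by rewrite -scaleN1r dotZl mulN1r. Qed.

Lemma dotBl x y z : dot (x - y) z = dot x z - dot y z.
Proof. by rewrite dotDl dotNl. Qed.

Lemma dotDr x y z : dot x (y + z) = dot x y + dot x z.
Proof. by rewrite dotC dotDl !(dotC x). Qed.

Lemma dotZr a x y : dot x (a *: y) = a * dot x y.
Proof. by rewrite dotC dotZl dotC. Qed.

Lemma dotNr x y : dot x (- y) = - dot x y.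
Proof. by rewrite dotC dotNl dotC. Qed.

Lemma dot0l x : dot 0 x = 0.
Proof. by rewrite -(scale0r 0) dotZl mul0r. Qed.

Lemma dot0r x : dot x 0 = 0.
Proof. by rewrite dotC dot0l. Qed.

Lemma dot_delta_mx x (i : 'I_n) : dot x (delta_mx i 0) = x i 0.
Proof.
rewrite /dot (bigD1 i) //= big1 => [|j ji]; first by rewrite !mxE !eqxx mulr1 addr0.
by rewrite !mxE (negbTE ji) mulr0.
Qed.

Lemma dot_ge0 x : 0 <= dot x x.
Proof. by apply: sumr_ge0 => i _; rewrite -expr2 sqr_ge0. Qed.

Lemma dot_eq0 x : (dot x x == 0) = (x == 0).
Proof.
apply/idP/eqP => [|->]; last by rewrite dot0l.
rewrite psumr_eq0 => [/allP x0|i _]; last by rewrite -expr2 sqr_ge0.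
apply/matrixP => i j; rewrite ord1 mxE.
by have /implyP/(_ isT) := x0 i (mem_index_enum _); rewrite mulf_eq0 orbb => /eqP.
Qed.

Lemma enorm_ge0 x : 0 <= enorm x.
Proof. exact: sqrtr_ge0. Qed.

Lemma enorm_sqr x : enorm x ^+ 2 = dot x x.
Proof. by rewrite sqr_sqrtr // dot_ge0. Qed.

Lemma enorm_eq0 x : (enorm x == 0) = (x == 0).
Proof. by rewrite sqrtr_eq0 le_eqVlt ltNge dot_ge0 orbF dot_eq0. Qed.

Lemma enorm_gt0 x : x != 0 -> 0 < enorm x.
Proof. by rewrite -enorm_eq0 lt_neqAle eq_sym enorm_ge0 andbT. Qed.

Lemma enorm0 : enorm (0 : vec) = 0.
Proof. by apply/eqP; rewrite enorm_eq0. Qed.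

Lemma enorm_delta_mx (i : 'I_n) : enorm (delta_mx i 0 : vec) = 1.
Proof. by rewrite /enorm dot_delta_mx mxE !eqxx sqrtr1. Qed.

Lemma enormZ a x : enorm (a *: x) = `|a| * enorm x.
Proof.
by rewrite /enorm dotZl dotZr mulrA -expr2 sqrtrM ?sqr_ge0 // sqrtr_sqr.
Qed.

Lemma enormN x : enorm (- x) = enorm x.
Proof. by rewrite -scaleN1r enormZ normrN normr1 mul1r. Qed.

Lemma enorm_sqrD x y :
  enorm (x + y) ^+ 2 = enorm x ^+ 2 + 2 * dot x y + enorm y ^+ 2.
Proof. by rewrite !enorm_sqr dotDl !dotDr (dotC y x); ring. Qed.

Lemma normr_coord_le x (i : 'I_n) : `|x i 0| <= enorm x.
Proof.
rewrite -sqrtr_sqr; apply: ler_wsqrtr; rewrite /dot (bigD1 i) //= expr2 lerDl.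
by apply: sumr_ge0 => j _; rewrite -expr2 sqr_ge0.
Qed.

Lemma dot_le_enorm u v : dot u v <= enorm u * enorm v.
Proof.
have [->|u0] := eqVneq u 0; first by rewrite dot0l mulr_ge0 ?enorm_ge0.
have [->|v0] := eqVneq v 0; first by rewrite dot0r mulr_ge0 ?enorm_ge0.
have ab_gt0 : 0 < enorm u * enorm v by rewrite mulr_gt0 ?enorm_gt0.
have := dot_ge0 (enorm v *: u - enorm u *: v).
rewrite -enorm_sqr enorm_sqrD enormN !enormZ dotNr !dotZl !dotZr.
by rewrite !ger0_norm ?enorm_ge0 // !exprMn; nra.
Qed.

Lemma normr_dot_le u v : `|dot u v| <= enorm u * enorm v.
Proof.
rewrite ler_norml dot_le_enorm andbT.
by have := dot_le_enorm u (- v); rewrite dotNr enormN; lra.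
Qed.

Lemma enormD x y : enorm (x + y) <= enorm x + enorm y.
Proof.
rewrite -(ler_pXn2r (n := 2)) ?nnegrE ?addr_ge0 ?enorm_ge0 //.
by rewrite enorm_sqrD; have := dot_le_enorm x y; lra.
Qed.

End Euclidean.

Lemma le0_of_forall_le_divSn (R : realType) (a c : R) :
  (forall N : nat, a <= c / N.+1%:R) -> a <= 0.
Proof.
move=> le_ac; rewrite leNgt; apply/negP => a_gt0.
have c_gt0 : 0 < c by have := le_ac 0%N; rewrite divr1; lra.
have := archi_boundP (divr_ge0 (ltW c_gt0) (ltW a_gt0)).
set N := Num.Def.archi_bound _; rewrite ltr_pdivrMr // => ltN.
have := le_ac N; rewrite ler_pdivlMr ?ltr0Sn // -natr1; nra.
Qed.

Section SmoothConvex.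
Variables (R : realType) (n : nat).
Notation vec := 'cV[R]_n.
Variables (f : vec -> R) (g : vec -> vec).
Hypothesis f_grad : has_gradient f g.

Lemma has_gradient_cont x e : 0 < e ->
  exists2 rho, 0 < rho & forall z, enorm (z - x) < rho -> `|f z - f x| < e.
Proof.
move=> e_gt0; have [delta delta_gt0 f_diff] := f_grad x ltr01.
have c_gt0 : 0 < enorm (g x) + 1 by have := enorm_ge0 (g x); lra.
exists (Num.min delta (e / (enorm (g x) + 1))); first by rewrite lt_min delta_gt0 divr_gt0.
move=> z; rewrite lt_min ltr_pdivlMr // => /andP[z_delta z_e].
have := f_diff _ z_delta; rewrite [x + _]addrC subrK.
have := normr_dot_le (g x) (z - x).
have := ler_normD (f z - f x - dot (g x) (z - x)) (dot (g x) (z - x)).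
rewrite subrK; nra.
Qed.

Hypothesis f_convex : convex_fun f.

(* Compare the chord [t -> f (x + t (z - x))] with the first-order expansion
   at a small enough [t > 0]. *)
Lemma convex_gradient_ineq x z : f x + dot (g x) (z - x) <= f z.
Proof.
apply/ler_addgt0Pr => e e_gt0; set d := z - x.
have d_ge0 := enorm_ge0 d.
have d1_gt0 : 0 < enorm d + 1 by lra.
have eps_gt0 : 0 < e / (enorm d + 1) by rewrite divr_gt0.
have eps_d : e / (enorm d + 1) * enorm d <= e.
  by rewrite mulrAC ler_pdivrMr // ler_pM2l //; lra.
have [delta delta_gt0 f_diff] := f_grad x eps_gt0.
set t := Num.min 1 (delta / (enorm d + 1)).
have t_gt0 : 0 < t by rewrite lt_min ltr01 divr_gt0.
have t_le1 : t <= 1 by rewrite ge_min lexx.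
have t_delta : t * (enorm d + 1) <= delta by rewrite -ler_pdivlMr // ge_min lexx orbT.
have td_norm : enorm (t *: d) = t * enorm d by rewrite enormZ gtr0_norm.
have /f_diff : enorm (t *: d) < delta by rewrite td_norm; nra.
rewrite ler_norml dotZr td_norm => /andP[f_lower _].
have := f_convex x z (ltW t_gt0) t_le1.
have -> : (1 - t) *: x + t *: z = x + t *: d by rewrite scalerBl scale1r scalerBr addrAC addrA.
move=> f_upper.
have : t * (dot (g x) d - e / (enorm d + 1) * enorm d) <= t * (f z - f x) by lra.
rewrite ler_pM2l //; lra.
Qed.

Lemma convex_sub_le_dot p q : f q - f p <= dot (g q) (q - p).
Proof. by have := convex_gradient_ineq q p; rewrite -opprB dotNr; lra. Qed.

Variable L : R.
Hypothesis g_lip : lipschitz_with L g.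

Lemma dot_gradient_le y p d : dot (g p) d <= dot (g y) d + L * enorm (p - y) * enorm d.
Proof.
have -> : dot (g p) d = dot (g y) d + dot (g p - g y) d by rewrite dotBl addrC subrK.
rewrite lerD2l (le_trans (dot_le_enorm _ _)) //.
by apply: ler_wpM2r; [exact: enorm_ge0 | exact: g_lip].
Qed.

(* Riemann-sum form of the descent lemma, obtained by summing
   [convex_sub_le_dot] and [dot_gradient_le] along [m] steps of length [s]. *)
Lemma descent_sum y d s m : 0 <= s ->
  f (y + (m%:R * s) *: d) - f y <=
  m%:R * s * dot (g y) d + L * enorm d ^+ 2 * (s ^+ 2 * (m%:R * (m%:R + 1) / 2)).
Proof.
move=> s_ge0; elim: m => [|m IHm].
  by rewrite !mulr0n !mul0r scale0r addr0 subrr !mulr0 addr0.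
set p := y + (m%:R * s) *: d; set q := y + (m.+1%:R * s) *: d.
have q_p : q - p = s *: d.
  by rewrite opprD addrACA subrr add0r -scalerBl -mulrBl -natr1 addrC addKr mul1r.
have q_y : enorm (q - y) = m.+1%:R * s * enorm d.
  by rewrite /q addrC addKr enormZ ger0_norm // mulr_ge0.
have step := convex_sub_le_dot p q; rewrite q_p dotZr in step.
have := dot_gradient_le y q d; rewrite q_y => grad_q.
have : s * dot (g q) d <= s * (dot (g y) d + L * (m.+1%:R * s * enorm d) * enorm d).
  exact: ler_wpM2l.
have E : m.+1%:R * s * dot (g y) d
    + L * enorm d ^+ 2 * (s ^+ 2 * (m.+1%:R * (m.+1%:R + 1) / 2))
  = m%:R * s * dot (g y) d + L * enorm d ^+ 2 * (s ^+ 2 * (m%:R * (m%:R + 1) / 2))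
    + s * (dot (g y) d + L * (m.+1%:R * s * enorm d) * enorm d).
  by rewrite -natr1; field.
rewrite E; lra.
Qed.

Lemma descent_lemma y d : f (y + d) <= f y + dot (g y) d + L / 2 * enorm d ^+ 2.
Proof.
set A := dot (g y) d; set B := L * enorm d ^+ 2.
suff : f (y + d) - f y - A - B / 2 <= 0 by rewrite /B; lra.
apply: (@le0_of_forall_le_divSn _ _ (B / 2)) => N.
have s_ge0 : 0 <= N.+1%:R^-1 :> R by rewrite invr_ge0.
have := descent_sum y d N.+1 s_ge0.
rewrite mulfV ?pnatr_eq0 // scale1r mul1r -/A -/B.
set t := B / 2 / N.+1%:R.
have -> : B * (N.+1%:R^-1 ^+ 2 * (N.+1%:R * (N.+1%:R + 1) / 2)) = B / 2 + t.
  by rewrite /t; field.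
lra.
Qed.

End SmoothConvex.

Section HardThreshold.
Variables (R : realType) (n : nat).
Notation vec := 'cV[R]_n.

Definition supp (x : vec) : {set 'I_n} := [set i | x i 0 != 0].

Lemma l0norm_supp (x : vec) : l0norm x = #|supp x|.
Proof. by []. Qed.

Lemma coord_add_delta_mx (x : vec) (i j : 'I_n) (D : R) :
  (x + D *: delta_mx i 0) j 0 = if j == i then x j 0 + D else x j 0.
Proof. by rewrite !mxE eqxx andbT; case: eqP; rewrite ?mulr1 ?mulr0 ?addr0. Qed.

Lemma l0norm_add_delta_mx_le (x : vec) (i : 'I_n) (D : R) : x i 0 != 0 ->
  (l0norm (x + D *: delta_mx i 0)%R <= l0norm x)%N.
Proof.
move=> xi0; apply/subset_leq_card/fintype.subsetP => j; rewrite !inE coord_add_delta_mx.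
by case: (j =P i) => [->|]; rewrite ?xi0.
Qed.

Lemma l0norm_kill_coord (x : vec) (i : 'I_n) : x i 0 != 0 ->
  (l0norm (x + (- x i 0) *: delta_mx i 0)).+1 = l0norm x.
Proof.
move=> xi0; rewrite /l0norm [in RHS](cardsD1 i) inE xi0 add1n; congr _.+1.
apply: eq_card => j; rewrite !inE coord_add_delta_mx.
by case: (j =P i) => [->|]; rewrite ?subrr ?eqxx.
Qed.

Variables (lam K : R) (c x : vec).
Hypotheses (lam_ge0 : 0 <= lam) (K_gt0 : 0 < K).
Hypothesis x_min :
  is_argmin (fun z => lam * (l0norm z)%:R + K / 2 * enorm (z - c) ^+ 2) x.

Lemma hard_threshold_coord_ineq (i : 'I_n) (D : R) :
  lam * (l0norm x)%:R <=
  lam * (l0norm (x + D *: delta_mx i 0))%:R + D * K * (x i 0 - c i 0) + K / 2 * D ^+ 2.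
Proof.
have := x_min (x + D *: delta_mx i 0); rewrite /= addrAC (enorm_sqrD (x - c)) enormZ.
rewrite enorm_delta_mx mulr1 real_normK ?num_real // dotZr dot_delta_mx !mxE.
have expand (a b : R) :
  K / 2 * (a + 2 * (D * b) + D ^+ 2) = K / 2 * a + D * K * b + K / 2 * D ^+ 2.
  by field.
rewrite expand; lra.
Qed.

Lemma hard_threshold_fixed (i : 'I_n) : x i 0 != 0 -> x i 0 = c i 0.
Proof.
move=> xi0; have := hard_threshold_coord_ineq i (c i 0 - x i 0).
have : lam * (l0norm (x + (c i 0 - x i 0) *: delta_mx i 0))%:R <= lam * (l0norm x)%:R.
  by rewrite ler_wpM2l // ler_nat l0norm_add_delta_mx_le.
move=> l0_le l0_ge; have : K * (x i 0 - c i 0) ^+ 2 <= 0 by lra.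
rewrite pmulr_rle0 // => sqr_le0; apply/eqP.
by rewrite -subr_eq0 -sqrf_eq0 eq_le sqr_le0 sqr_ge0.
Qed.

Lemma hard_threshold_large (i : 'I_n) : x i 0 != 0 -> 2 * lam <= K * x i 0 ^+ 2.
Proof.
move=> xi0; have := hard_threshold_coord_ineq i (- x i 0).
have -> : x i 0 - c i 0 = 0 by rewrite hard_threshold_fixed // subrr.
rewrite mulr0 addr0 -(l0norm_kill_coord xi0) sqrrN.
by rewrite -natr1 mulrDr mulr1; lra.
Qed.

End HardThreshold.

Lemma prox_objective_complete_square (R : realType) (n : nat) (L mu : R)
    (y G z : 'cV[R]_n) : L != 0 -> L + mu != 0 ->
  L / 2 * enorm (z - y + L^-1 *: G) ^+ 2 + mu / 2 * enorm (z - y) ^+ 2 =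
  (L + mu) / 2 * enorm (z - (y - (L + mu)^-1 *: G)) ^+ 2
  + (L^-1 - (L + mu)^-1) / 2 * enorm G ^+ 2.
Proof.
move=> L0 K0; rewrite opprB addrCA addrC !(enorm_sqrD (z - y)) !enorm_sqr !dotZr !dotZl.
by field; rewrite K0 L0.
Qed.

Section LocalMinimizer.
Variables (R : realType) (n : nat).
Notation vec := 'cV[R]_n.
Variables (f : vec -> R) (g : vec -> vec) (lam delta : R) (xs : vec).
Hypotheses (f_grad : has_gradient f g) (f_convex : convex_fun f).
Hypotheses (lam_gt0 : 0 < lam) (delta_gt0 : 0 < delta).
Hypothesis supp_large : forall i, i \in supp xs -> delta <= `|xs i 0|.
Hypothesis supp_stationary : forall i, i \in supp xs -> g xs i 0 = 0.

Lemma supp_subset_near z : enorm (z - xs) < delta -> supp xs \subset supp z.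
Proof.
move=> z_near; apply/fintype.subsetP => i i_xs; rewrite inE; apply/eqP => zi0.
have := normr_coord_le (z - xs) i; rewrite !mxE zi0 sub0r normrN.
by have := supp_large i_xs; lra.
Qed.

Lemma dot_gradient_same_supp z : supp z = supp xs -> dot (g xs) (z - xs) = 0.
Proof.
move=> supp_z; apply: big1 => i _; rewrite !mxE.
case: (boolP (i \in supp xs)) => [/supp_stationary -> | i_xs]; first by rewrite mul0r.
have xs_i : xs i 0 = 0 by apply/eqP; move: i_xs; rewrite inE negbK.
have z_i : z i 0 = 0 by apply/eqP; move: i_xs; rewrite -supp_z inE negbK.
by rewrite z_i xs_i subrr mulr0.
Qed.

Lemma stationary_supp_local_minimizer : local_minimizer (Hfun f lam) xs.
Proof.
have [rho rho_gt0 f_near] := has_gradient_cont f_grad xs lam_gt0.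
exists (Num.min delta rho); first by rewrite lt_min delta_gt0.
move=> z; rewrite lt_min => /andP[z_delta z_rho].
have f_conv := convex_gradient_ineq f_grad f_convex xs z.
have := f_near _ z_rho; rewrite ltr_norml => /andP[f_lower _].
have supp_sub := supp_subset_near z_delta.
rewrite /Hfun !l0norm_supp; have [supp_eq|supp_neq] := eqVneq (supp z) (supp xs).
  by rewrite supp_eq (dot_gradient_same_supp supp_eq) addr0 in f_conv *; lra.
have : (#|supp xs|.+1 <= #|supp z|)%N.
  by apply: proper_card; rewrite finset.properEneq eq_sym supp_neq.
rewrite -(ler_nat R) -natr1 => card_lt.
have : lam * (#|supp xs|%:R + 1) <= lam * #|supp z|%:R by rewrite ler_pM2l.
lra.
Qed.

End LocalMinimizer.

Lemma eventually_const_of_subset (T : finType) (S : nat -> {set T}) (N0 : nat) :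
  (forall k, (N0 <= k)%N -> S k.+1 \subset S k) ->
  exists N1, forall k, (N1 <= k)%N -> S k = S N1.
Proof.
move=> S_dec.
have S_mono : {homo (fun j => S (N0 + j)%N) : i j / (i <= j)%N >-> j \subset i}.
  apply: (@homo_leq _ _ (fun A B => B \subset A)) => [A|A B C AB BC|j].
  - exact: subxx.
  - exact: fintype.subset_trans BC AB.
  - by rewrite addnS; apply: S_dec; exact: leq_addr.
pose P m := `[< exists j, #|S (N0 + j)%N| = m >].
have : exists m, P m by exists #|S N0|; apply/asboolP; exists 0%N; rewrite addn0.
case/ex_minnP => m /asboolP [j card_j] m_min.
exists (N0 + j)%N => k le_k.
have N0_k : (N0 <= k)%N by apply: leq_trans le_k; exact: leq_addr.
have sub : S k \subset S (N0 + j)%N.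
  by rewrite -(subnKC le_k) -addnA; apply: S_mono; exact: leq_addr.
apply/eqP; rewrite eqEcard sub card_j /=; apply: m_min.
by apply/asboolP; exists (k - N0)%N; rewrite subnKC.
Qed.

Lemma eq0_of_normr_le_pmul (R : realType) (a c : R) :
  0 < c -> (forall e, 0 < e -> `|a| <= c * e) -> a = 0.
Proof.
move=> c_gt0 le_a; apply/normr0_eq0/eqP; rewrite eq_le normr_ge0 andbT.
apply/ler_addgt0Pr => e e_gt0; rewrite add0r.
by have := le_a (e / c) (divr_gt0 e_gt0 c_gt0); rewrite mulrC divfK ?gt_eqF.
Qed.

Section VMEPIHT.
Variables (R : realType) (n : nat).
Notation vec := 'cV[R]_n.
Variables (f : vec -> R) (g : vec -> vec) (L mu lam : R) (x y : nat -> vec)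
  (alpha : nat -> R) (Hm : nat -> 'M[R]_n).
Hypotheses (f_convex : convex_fun f) (f_grad : has_gradient f g) (f_lb : bounded_below f).
Hypotheses (L_gt0 : 0 < L) (g_lip : lipschitz_with L g).
Hypotheses (mu_gt0 : 0 < mu) (lam_gt0 : 0 < lam).
Hypothesis iter : VMEPIHT f g L mu lam x y alpha Hm.

Local Notation K := (L + mu).
Let Hx k := Hfun f lam (x k).

Lemma K_gt0 : 0 < K.
Proof. exact: addr_gt0. Qed.

Lemma prox_step_hard_threshold k :
  is_argmin (fun z => lam * (l0norm z)%:R
                      + K / 2 * enorm (z - (y k - K^-1 *: g (y k))) ^+ 2) (x k).
Proof.
have [x_min _ _ _ _] := iter k.
have obj (z : vec) :
    lam * (l0norm z)%:R + L / 2 * enorm (z - y k + L^-1 *: g (y k)) ^+ 2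
    + mu / 2 * enorm (z - y k) ^+ 2
  = lam * (l0norm z)%:R + K / 2 * enorm (z - (y k - K^-1 *: g (y k))) ^+ 2
    + (L^-1 - K^-1) / 2 * enorm (g (y k)) ^+ 2.
  by rewrite -addrA prox_objective_complete_square ?gt_eqF ?K_gt0 // addrA.
by move=> z; have := x_min z; rewrite /= !obj; lra.
Qed.

Lemma Hfun_x_le_y k : Hx k + mu / 2 * enorm (x k - y k) ^+ 2 <= Hfun f lam (y k).
Proof.
have [x_min _ _ _ _] := iter k.
have := x_min (y k); rewrite /= subrr add0r enorm0 expr0n /= mulr0 addr0.
rewrite enorm_sqrD dotZr dotC => min_y.
have := descent_lemma f_grad f_convex g_lip (y k) (x k - y k).
rewrite [y k + _]addrC subrK => descent.
have cancel_L : L / 2 * (2 * (L^-1 * dot (g (y k)) (x k - y k))) = dot (g (y k)) (x k - y k).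
  by field; rewrite gt_eqF.
rewrite /Hx /Hfun; move: min_y; rewrite !mulrDr cancel_L; lra.
Qed.

Lemma supp_y_sub_x k : supp (y k.+1) \subset supp (x k).
Proof.
have [_ _ _ [y_C _] _] := iter k.
apply/fintype.subsetP => i; rewrite !inE; apply: contra => /eqP xi0.
by apply/eqP; apply: y_C; rewrite inE xi0.
Qed.

Lemma Hfun_y_le_x k : Hfun f lam (y k.+1) <= Hx k.
Proof.
have [_ _ _ _ f_le] := iter k.
rewrite /Hx /Hfun !l0norm_supp lerD // ler_wpM2l ?(ltW lam_gt0) // ler_nat.
exact/subset_leq_card/supp_y_sub_x.
Qed.

Lemma Hx_sufficient_decrease k : Hx k.+1 + mu / 2 * enorm (x k.+1 - y k.+1) ^+ 2 <= Hx k.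
Proof. exact: le_trans (Hfun_x_le_y k.+1) (Hfun_y_le_x k). Qed.

Lemma Hx_nonincreasing : {homo Hx : i j / (i <= j)%N >-> j <= i}.
Proof.
apply: (@homo_leq _ _ (fun a b => b <= a)) => [a|a b c ba cb|k].
- exact: lexx.
- exact: le_trans cb ba.
- have := Hx_sufficient_decrease k; have : 0 <= mu / 2 * enorm (x k.+1 - y k.+1) ^+ 2.
    by rewrite mulr_ge0 ?sqr_ge0 ?divr_ge0 ?(ltW mu_gt0).
  lra.
Qed.

Lemma Hx_lbound : has_lbound (range Hx).
Proof.
have [m f_ge] := f_lb; exists m => _ [k _ <-].
have := f_ge (x k); have : 0 <= lam * (l0norm (x k))%:R.
  by rewrite mulr_ge0 ?ler0n ?(ltW lam_gt0).
rewrite /Hx /Hfun; lra.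
Qed.

Lemma Hx_cvg : (Hx @ \oo --> inf (range Hx))%classic.
Proof. exact: nonincreasing_cvgn Hx_nonincreasing Hx_lbound. Qed.

Lemma inf_le_Hx k : inf (range Hx) <= Hx k.
Proof. by apply: (ge_inf Hx_lbound); exists k. Qed.

Lemma x_sub_y_small eta : 0 < eta ->
  exists N, forall k, (N <= k)%N -> enorm (x k - y k) < eta.
Proof.
move=> eta_gt0; have e_gt0 : 0 < mu / 2 * eta ^+ 2 by rewrite mulr_gt0 ?divr_gt0 ?exprn_gt0.
have /cvgrPdist_lt/(_ _ e_gt0) [N _ Hx_near] := Hx_cvg.
exists N.+1 => -[//|k] le_k.
have := Hx_near k le_k; rewrite ltr_norml => /andP[Hx_k _].
have := inf_le_Hx k.+1; have := Hx_sufficient_decrease k => decr inf_le.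
have : mu / 2 * enorm (x k.+1 - y k.+1) ^+ 2 < mu / 2 * eta ^+ 2 by lra.
rewrite ltr_pM2l ?divr_gt0 // => lt_sq.
by rewrite -(ltr_pXn2r (n := 2)) ?nnegrE ?enorm_ge0 // ltW.
Qed.

Let delta := Num.sqrt (2 * lam / K).

Lemma delta_gt0 : 0 < delta.
Proof. by rewrite sqrtr_gt0 divr_gt0 ?mulr_gt0 ?K_gt0. Qed.

Lemma x_coord_large k i : x k i 0 != 0 -> delta <= `|x k i 0|.
Proof.
move=> xi0; have := hard_threshold_large (ltW lam_gt0) K_gt0 (prox_step_hard_threshold k) xi0.
by rewrite -ler_pdivrMl ?K_gt0 // => /ler_wsqrtr; rewrite /delta mulrC sqrtr_sqr.
Qed.

Lemma x_coord_stationary k i : x k i 0 != 0 -> K * (x k i 0 - y k i 0) + g (y k) i 0 = 0.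
Proof.
move=> xi0; rewrite (hard_threshold_fixed (ltW lam_gt0) K_gt0 (prox_step_hard_threshold k) xi0).
by rewrite !mxE; field; rewrite gt_eqF ?K_gt0.
Qed.

Lemma supp_x_eventually_decreasing :
  exists N0, forall k, (N0 <= k)%N -> supp (x k.+1) \subset supp (x k).
Proof.
have [N0 xy_small] := x_sub_y_small delta_gt0.
exists N0 => k le_k; apply/fintype.subsetP => i xi; apply: contraT => xi_out.
have yi0 : y k.+1 i 0 = 0.
  apply/eqP; apply: contraR xi_out => yi.
  by apply: (fintype.subsetP (supp_y_sub_x k)); rewrite inE.
have := x_coord_large (i := i) (k := k.+1); rewrite inE in xi => /(_ xi).
have := normr_coord_le (x k.+1 - y k.+1) i; rewrite !mxE yi0 subr0.
by have := xy_small k.+1 (leqW le_k); lra.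
Qed.

Lemma supp_x_stable : exists N1, forall k, (N1 <= k)%N -> supp (x k) = supp (x N1).
Proof.
have [N0 supp_dec] := supp_x_eventually_decreasing.
exact: eventually_const_of_subset supp_dec.
Qed.

Section ClusterPoint.
Variables (xs : vec) (N1 : nat).
Hypothesis xs_cluster : cluster_point x xs.
Hypothesis supp_stable : forall k, (N1 <= k)%N -> supp (x k) = supp (x N1).

Lemma x_coord_supp k i : (N1 <= k)%N -> (x k i 0 != 0) = (i \in supp (x N1)).
Proof. by move=> le_k; rewrite -(supp_stable le_k) inE. Qed.

Lemma cluster_coord_large i : i \in supp (x N1) -> delta <= `|xs i 0|.
Proof.
move=> i_supp; rewrite leNgt; apply/negP => xs_small.
have eps_gt0 : 0 < delta - `|xs i 0| by rewrite subr_gt0.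
have [k le_k x_near] := xs_cluster eps_gt0 N1.
have := x_coord_large (k := k) (i := i); rewrite x_coord_supp // => /(_ i_supp).
have := normr_coord_le (x k - xs) i; rewrite !mxE.
by have := ler_normD (x k i 0 - xs i 0) (xs i 0); rewrite subrK; lra.
Qed.

Lemma cluster_coord_zero i : i \notin supp (x N1) -> xs i 0 = 0.
Proof.
move=> i_supp; apply/eqP; apply: contraT; rewrite -normr_gt0 => xs_pos.
have [k le_k x_near] := xs_cluster xs_pos N1.
have := normr_coord_le (x k - xs) i; rewrite !mxE.
have /negbFE/eqP -> : x k i 0 != 0 = false by rewrite x_coord_supp // (negbTE i_supp).
by rewrite sub0r normrN; lra.
Qed.

Lemma supp_cluster : supp xs = supp (x N1).
Proof.
apply/setP => i; rewrite [in LHS]inE; case: (boolP (i \in supp (x N1))) => i_supp.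
  by rewrite -normr_gt0; apply: lt_le_trans delta_gt0 (cluster_coord_large i_supp).
by rewrite cluster_coord_zero ?eqxx.
Qed.

Lemma cluster_stationary i : i \in supp xs -> g xs i 0 = 0.
Proof.
rewrite supp_cluster => i_supp.
have c_gt0 : 0 < 2 * L + K by rewrite addr_gt0 ?mulr_gt0 ?K_gt0.
apply: (eq0_of_normr_le_pmul c_gt0) => e e_gt0.
have [Nd xy_small] := x_sub_y_small e_gt0.
have [k] := xs_cluster e_gt0 (maxn N1 Nd); rewrite geq_max => /andP[le_N1 le_Nd] x_near.
have stat : K * (x k i 0 - y k i 0) + g (y k) i 0 = 0.
  by apply: x_coord_stationary; rewrite x_coord_supp.
have -> : g xs i 0 = (g xs - g (y k)) i 0 - K * (x k i 0 - y k i 0) by rewrite !mxE; lra.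
have g_near : `|(g xs - g (y k)) i 0| <= L * (2 * e).
  apply: le_trans (normr_coord_le _ _) _; apply: le_trans (g_lip _ _) _.
  rewrite ler_pM2l //; have := enormD (xs - x k) (x k - y k).
  rewrite addrA subrK -[xs - x k]opprB enormN.
  by have := xy_small k le_Nd; lra.
have xy_near : K * `|x k i 0 - y k i 0| <= K * e.
  rewrite ler_pM2l ?K_gt0 //; have := normr_coord_le (x k - y k) i; rewrite !mxE.
  by have := xy_small k le_Nd; lra.
have := ler_normB ((g xs - g (y k)) i 0) (K * (x k i 0 - y k i 0)).
by rewrite normrM gtr0_norm ?K_gt0 //; lra.
Qed.

Lemma lim_Hx_cluster : inf (range Hx) = Hfun f lam xs.
Proof.
apply/eqP; rewrite -subr_eq0; apply/eqP.
apply: (@eq0_of_normr_le_pmul R _ 2) => // e e_gt0.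
have /cvgrPdist_lt/(_ _ e_gt0) [N2 _ Hx_near] := Hx_cvg.
have [rho rho_gt0 f_near] := has_gradient_cont f_grad xs e_gt0.
have [k] := xs_cluster rho_gt0 (maxn N1 N2); rewrite geq_max => /andP[le_N1 le_N2] x_near.
have l0_eq : l0norm (x k) = l0norm xs by rewrite !l0norm_supp supp_cluster supp_stable.
have := Hx_near k le_N2; have := f_near _ x_near.
by rewrite /Hx /Hfun l0_eq !ltr_norml ler_norml; lra.
Qed.

Lemma cluster_local_minimizer : local_minimizer (Hfun f lam) xs.
Proof.
apply: (stationary_supp_local_minimizer f_grad f_convex lam_gt0 delta_gt0).
  by move=> i; rewrite supp_cluster; exact: cluster_coord_large.
exact: cluster_stationary.
Qed.

End ClusterPoint.

Lemma cluster_point_local_minimizer xs :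
  cluster_point x xs -> local_minimizer (Hfun f lam) xs.
Proof.
have [N1 supp_stable] := supp_x_stable.
by move=> xs_cluster; exact: cluster_local_minimizer xs_cluster supp_stable.
Qed.

Lemma cluster_point_Hx_cvg xs :
  cluster_point x xs -> (Hx @ \oo --> Hfun f lam xs)%classic.
Proof.
have [N1 supp_stable] := supp_x_stable.
by move=> xs_cluster; rewrite -(lim_Hx_cluster xs_cluster supp_stable); exact: Hx_cvg.
Qed.

End VMEPIHT.

Unset Implicit Arguments.
Local Open Scope classical_set_scope.

Theorem theorem1 (R : realType) (n : nat) (f : 'cV[R]_n -> R) (g : 'cV[R]_n -> 'cV[R]_n)
  (L mu lam : R) (x y : nat -> 'cV[R]_n) (alpha : nat -> R) (Hm : nat -> 'M[R]_n) :
  convex_fun f -> has_gradient f g -> bounded_below f ->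
  0 < L -> lipschitz_with L g ->
  0 < mu -> 0 < lam ->
  VMEPIHT f g L mu lam x y alpha Hm ->
  (forall xs, cluster_point x xs -> local_minimizer (Hfun f lam) xs) /\
  (forall xs, cluster_point x xs ->
     (fun k => Hfun f lam (x k)) @ \oo --> Hfun f lam xs).
Proof.
move=> f_convex f_grad f_lb L_gt0 g_lip mu_gt0 lam_gt0 iter; split=> xs.
  exact: (cluster_point_local_minimizer f_convex f_grad f_lb L_gt0 g_lip mu_gt0 lam_gt0 iter).
exact: (cluster_point_Hx_cvg f_convex f_grad f_lb L_gt0 g_lip mu_gt0 lam_gt0 iter).
Qed.
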